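(* Let $K$ be the $2$-uniform tiling of the plane whose vertex types are $[3^1,4^2,6^1]$ and $[3^1,4^1,6^1,4^1]$. If $X$ is a map on the torus that is a quotient $X=K/\Gamma$ of $K$, then the vertices of $X$ form at most $9$ orbits under ${\rm Aut}(X)$.
   Context: A map is a polyhedral map: a cellular embedding of a connected graph in a closed surface such that the intersection of any two distinct faces is empty, a single vertex, or a single edge. For a vertex $u$, the faces containing $u$ form a cyclic sequence (the face-cycle at $u$); if this cyclic sequence consists of consecutive blocks of $n_1$ $p_1$-gons, then $n_2$ $p_2$-gons, ..., then $n_k$ $p_k$-gons, with cyclically consecutive $p_i$ distinct, then $u$ is said to have type $[p_1^{n_1},\dots,p_k^{n_k}]$ (defined up to cyclic shift and reversal). A $2$-uniform tiling is an edge-to-edge tiling of the Euclidean plane $\mathbb{R}^2$ by regular polygons whose symmetry group has exactly two orbits on the set of vertices; viewed as a map on the plane, its vertices have (at most) two types, listed as $[W;Z]$. (Up to isomorphism there are exactly $20$ such tilings; there is exactly one with the vertex types named in the claim.) For a map $K$ on the plane, a quotient of $K$ on the torus is a map $X$ on the torus together with a polyhedral covering map $\eta:K\to X$ with $X=K/\Gamma$, where $\Gamma\le {\rm Aut}(K)$ is a subgroup acting without fixed vertices, edges or faces and $K/\Gamma$ is homeomorphic to the torus. ${\rm Aut}(X)$ denotes the automorphism group of the map $X$, acting on its vertex set $V(X)$. *)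

From mathcomp Require Import all_boot all_order all_algebra all_fingroup.
From Stdlib Require Import Relations.
Set Implicit Arguments. Unset Strict Implicit. Unset Printing Implicit Defensive.
Import GRing.Theory Num.Theory.

(* Maps are encoded combinatorially by their flags: a map with flag set F is  *)
(* given by three involutions r0 r1 r2 : F -> F (r0 changes the vertex of a   *)
(* flag, r1 its edge, r2 its face).  Vertices, edges and faces are the orbits *)
(* of <r1,r2>, <r0,r2> and <r0,r1> respectively.                              *)

(* K is doubly periodic.  A flag of K is (a, b, k): a translate by a*A + b*B  *)
(* (A, B a basis of the translation lattice) of flag number k of a            *)
(* fundamental cell.  The fundamental cell consists of 18 faces (6 triangles, *)
(* 9 squares, 3 hexagons; faces numbered 0..17 with sizes faceK_sizes), 18    *)
(* vertices and 36 edges, hence 144 flags; flag number k of the cell is the   *)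
(* triple (face f, vertex position i in the counterclockwise boundary of f,   *)
(* direction d in {0,1}) listed lexicographically.  The tables below were     *)
(* generated from the geometric tiling (a hexagon surrounded by 6 squares     *)
(* and 6 triangles forming a dodecagonal patch; these patches are placed as   *)
(* the dodecagons of the 4.6.12 tiling, each patch square facing a square of  *)
(* the 4.6.12 tiling).  Lemma K_vertex_types below checks by computation that *)
(* every vertex of K has type [3,4,4,6] or [3,4,6,4].                         *)

Definition faceK_sizes : seq nat :=
  [:: 3; 3; 3; 3; 3; 3; 4; 4; 4; 4; 4; 4; 4; 4; 4; 6; 6; 6]%N.

Local Open Scope ring_scope.
Definition r0_tab : seq (int * int * nat) := [::
  (0, 0, 3%N); (0, 0, 4%N); (0, 0, 5%N); (0, 0, 0%N); (0, 0, 1%N); (0, 0, 2%N);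
  (0, 0, 9%N); (0, 0, 10%N); (0, 0, 11%N); (0, 0, 6%N); (0, 0, 7%N); (0, 0, 8%N);
  (0, 0, 15%N); (0, 0, 16%N); (0, 0, 17%N); (0, 0, 12%N); (0, 0, 13%N); (0, 0, 14%N);
  (0, 0, 21%N); (0, 0, 22%N); (0, 0, 23%N); (0, 0, 18%N); (0, 0, 19%N); (0, 0, 20%N);
  (0, 0, 27%N); (0, 0, 28%N); (0, 0, 29%N); (0, 0, 24%N); (0, 0, 25%N); (0, 0, 26%N);
  (0, 0, 33%N); (0, 0, 34%N); (0, 0, 35%N); (0, 0, 30%N); (0, 0, 31%N); (0, 0, 32%N);
  (0, 0, 39%N); (0, 0, 42%N); (0, 0, 41%N); (0, 0, 36%N); (0, 0, 43%N); (0, 0, 38%N);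
  (0, 0, 37%N); (0, 0, 40%N); (0, 0, 47%N); (0, 0, 50%N); (0, 0, 49%N); (0, 0, 44%N);
  (0, 0, 51%N); (0, 0, 46%N); (0, 0, 45%N); (0, 0, 48%N); (0, 0, 55%N); (0, 0, 58%N);
  (0, 0, 57%N); (0, 0, 52%N); (0, 0, 59%N); (0, 0, 54%N); (0, 0, 53%N); (0, 0, 56%N);
  (0, 0, 63%N); (0, 0, 66%N); (0, 0, 65%N); (0, 0, 60%N); (0, 0, 67%N); (0, 0, 62%N);
  (0, 0, 61%N); (0, 0, 64%N); (0, 0, 71%N); (0, 0, 74%N); (0, 0, 73%N); (0, 0, 68%N);
  (0, 0, 75%N); (0, 0, 70%N); (0, 0, 69%N); (0, 0, 72%N); (0, 0, 79%N); (0, 0, 82%N);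
  (0, 0, 81%N); (0, 0, 76%N); (0, 0, 83%N); (0, 0, 78%N); (0, 0, 77%N); (0, 0, 80%N);
  (0, 0, 87%N); (0, 0, 90%N); (0, 0, 89%N); (0, 0, 84%N); (0, 0, 91%N); (0, 0, 86%N);
  (0, 0, 85%N); (0, 0, 88%N); (0, 0, 95%N); (0, 0, 98%N); (0, 0, 97%N); (0, 0, 92%N);
  (0, 0, 99%N); (0, 0, 94%N); (0, 0, 93%N); (0, 0, 96%N); (0, 0, 103%N); (0, 0, 106%N);
  (0, 0, 105%N); (0, 0, 100%N); (0, 0, 107%N); (0, 0, 102%N); (0, 0, 101%N); (0, 0, 104%N);
  (0, 0, 111%N); (0, 0, 118%N); (0, 0, 113%N); (0, 0, 108%N); (0, 0, 115%N); (0, 0, 110%N);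
  (0, 0, 117%N); (0, 0, 112%N); (0, 0, 119%N); (0, 0, 114%N); (0, 0, 109%N); (0, 0, 116%N);
  (0, 0, 123%N); (0, 0, 130%N); (0, 0, 125%N); (0, 0, 120%N); (0, 0, 127%N); (0, 0, 122%N);
  (0, 0, 129%N); (0, 0, 124%N); (0, 0, 131%N); (0, 0, 126%N); (0, 0, 121%N); (0, 0, 128%N);
  (0, 0, 135%N); (0, 0, 142%N); (0, 0, 137%N); (0, 0, 132%N); (0, 0, 139%N); (0, 0, 134%N);
  (0, 0, 141%N); (0, 0, 136%N); (0, 0, 143%N); (0, 0, 138%N); (0, 0, 133%N); (0, 0, 140%N)
].

Definition r1_tab : seq (int * int * nat) := [::
  (0, 0, 1%N); (0, 0, 0%N); (0, 0, 3%N); (0, 0, 2%N); (0, 0, 5%N); (0, 0, 4%N);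
  (0, 0, 7%N); (0, 0, 6%N); (0, 0, 9%N); (0, 0, 8%N); (0, 0, 11%N); (0, 0, 10%N);
  (0, 0, 13%N); (0, 0, 12%N); (0, 0, 15%N); (0, 0, 14%N); (0, 0, 17%N); (0, 0, 16%N);
  (0, 0, 19%N); (0, 0, 18%N); (0, 0, 21%N); (0, 0, 20%N); (0, 0, 23%N); (0, 0, 22%N);
  (0, 0, 25%N); (0, 0, 24%N); (0, 0, 27%N); (0, 0, 26%N); (0, 0, 29%N); (0, 0, 28%N);
  (0, 0, 31%N); (0, 0, 30%N); (0, 0, 33%N); (0, 0, 32%N); (0, 0, 35%N); (0, 0, 34%N);
  (0, 0, 37%N); (0, 0, 36%N); (0, 0, 39%N); (0, 0, 38%N); (0, 0, 41%N); (0, 0, 40%N);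
  (0, 0, 43%N); (0, 0, 42%N); (0, 0, 45%N); (0, 0, 44%N); (0, 0, 47%N); (0, 0, 46%N);
  (0, 0, 49%N); (0, 0, 48%N); (0, 0, 51%N); (0, 0, 50%N); (0, 0, 53%N); (0, 0, 52%N);
  (0, 0, 55%N); (0, 0, 54%N); (0, 0, 57%N); (0, 0, 56%N); (0, 0, 59%N); (0, 0, 58%N);
  (0, 0, 61%N); (0, 0, 60%N); (0, 0, 63%N); (0, 0, 62%N); (0, 0, 65%N); (0, 0, 64%N);
  (0, 0, 67%N); (0, 0, 66%N); (0, 0, 69%N); (0, 0, 68%N); (0, 0, 71%N); (0, 0, 70%N);
  (0, 0, 73%N); (0, 0, 72%N); (0, 0, 75%N); (0, 0, 74%N); (0, 0, 77%N); (0, 0, 76%N);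
  (0, 0, 79%N); (0, 0, 78%N); (0, 0, 81%N); (0, 0, 80%N); (0, 0, 83%N); (0, 0, 82%N);
  (0, 0, 85%N); (0, 0, 84%N); (0, 0, 87%N); (0, 0, 86%N); (0, 0, 89%N); (0, 0, 88%N);
  (0, 0, 91%N); (0, 0, 90%N); (0, 0, 93%N); (0, 0, 92%N); (0, 0, 95%N); (0, 0, 94%N);
  (0, 0, 97%N); (0, 0, 96%N); (0, 0, 99%N); (0, 0, 98%N); (0, 0, 101%N); (0, 0, 100%N);
  (0, 0, 103%N); (0, 0, 102%N); (0, 0, 105%N); (0, 0, 104%N); (0, 0, 107%N); (0, 0, 106%N);
  (0, 0, 109%N); (0, 0, 108%N); (0, 0, 111%N); (0, 0, 110%N); (0, 0, 113%N); (0, 0, 112%N);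
  (0, 0, 115%N); (0, 0, 114%N); (0, 0, 117%N); (0, 0, 116%N); (0, 0, 119%N); (0, 0, 118%N);
  (0, 0, 121%N); (0, 0, 120%N); (0, 0, 123%N); (0, 0, 122%N); (0, 0, 125%N); (0, 0, 124%N);
  (0, 0, 127%N); (0, 0, 126%N); (0, 0, 129%N); (0, 0, 128%N); (0, 0, 131%N); (0, 0, 130%N);
  (0, 0, 133%N); (0, 0, 132%N); (0, 0, 135%N); (0, 0, 134%N); (0, 0, 137%N); (0, 0, 136%N);
  (0, 0, 139%N); (0, 0, 138%N); (0, 0, 141%N); (0, 0, 140%N); (0, 0, 143%N); (0, 0, 142%N)
].

Definition r2_tab : seq (int * int * nat) := [::
  (0, 0, 129%N); (0, 0, 60%N); (0, 0, 45%N); (0, 0, 126%N); (0, 0, 63%N); (0, 0, 50%N);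
  (0, 0, 75%N); (0, 0, 122%N); (0, 0, 37%N); (0, 0, 72%N); (0, 0, 125%N); (0, 0, 42%N);
  (0, 1, 67%N); (0, 0, 136%N); (0, 0, 71%N); (0, 1, 64%N); (0, 0, 139%N); (0, 0, 68%N);
  (0, 0, 107%N); (0, 0, 92%N); (0, 0, 121%N); (0, 0, 104%N); (0, 0, 95%N); (0, 0, 130%N);
  (0, 0, 143%N); (1, 0, 46%N); (0, 0, 103%N); (0, 0, 140%N); (1, 0, 49%N); (0, 0, 100%N);
  (0, 1, 99%N); (1, 0, 38%N); (0, 0, 135%N); (0, 1, 96%N); (1, 0, 41%N); (0, 0, 132%N);
  (0, 1, 119%N); (0, 0, 8%N); (-1, 0, 31%N); (0, 1, 116%N); (0, 0, 55%N); (-1, 0, 34%N);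
  (0, 0, 11%N); (0, 0, 52%N); (0, 0, 59%N); (0, 0, 2%N); (-1, 0, 25%N); (0, 0, 56%N);
  (0, 0, 113%N); (-1, 0, 28%N); (0, 0, 5%N); (0, 0, 110%N); (0, 0, 43%N); (0, 0, 124%N);
  (-1, 0, 133%N); (0, 0, 40%N); (0, 0, 47%N); (-1, 0, 142%N); (0, 0, 127%N); (0, 0, 44%N);
  (0, 0, 1%N); (0, 0, 78%N); (0, 0, 111%N); (0, 0, 4%N); (0, -1, 15%N); (0, 0, 108%N);
  (0, 0, 81%N); (0, -1, 12%N); (0, 0, 17%N); (0, 0, 86%N); (0, 1, 109%N); (0, 0, 14%N);
  (0, 0, 9%N); (0, 1, 118%N); (0, 0, 89%N); (0, 0, 6%N); (0, 0, 131%N); (0, 0, 94%N);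
  (0, 0, 61%N); (0, 0, 128%N); (0, -1, 137%N); (0, 0, 66%N); (0, 0, 97%N); (0, -1, 134%N);
  (0, 0, 141%N); (0, 0, 102%N); (0, 0, 69%N); (0, 0, 138%N); (0, 0, 123%N); (0, 0, 74%N);
  (0, 0, 105%N); (0, 0, 120%N); (0, 0, 19%N); (1, 0, 114%N); (0, 0, 77%N); (0, 0, 22%N);
  (0, -1, 33%N); (0, 0, 82%N); (1, 0, 117%N); (0, -1, 30%N); (0, 0, 29%N); (1, 0, 112%N);
  (0, 0, 85%N); (0, 0, 26%N); (0, 0, 21%N); (0, 0, 90%N); (1, 0, 115%N); (0, 0, 18%N);
  (0, 0, 65%N); (0, -1, 70%N); (0, 0, 51%N); (0, 0, 62%N); (-1, 0, 101%N); (0, 0, 48%N);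
  (-1, 0, 93%N); (-1, 0, 106%N); (0, -1, 39%N); (-1, 0, 98%N); (0, -1, 73%N); (0, -1, 36%N);
  (0, 0, 91%N); (0, 0, 20%N); (0, 0, 7%N); (0, 0, 88%N); (0, 0, 53%N); (0, 0, 10%N);
  (0, 0, 3%N); (0, 0, 58%N); (0, 0, 79%N); (0, 0, 0%N); (0, 0, 23%N); (0, 0, 76%N);
  (0, 0, 35%N); (1, 0, 54%N); (0, 1, 83%N); (0, 0, 32%N); (0, 0, 13%N); (0, 1, 80%N);
  (0, 0, 87%N); (0, 0, 16%N); (0, 0, 27%N); (0, 0, 84%N); (1, 0, 57%N); (0, 0, 24%N)
].

Local Close Scope ring_scope.

Definition flagK : Type := (int * int * 'I_144)%type.

Definition applyK (tab : seq (int * int * nat)) (x : flagK) : flagK :=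
  let: (a, b, k) := x in
  let: (da, db, k') := nth (0%R, 0%R, 0%N) tab k in
  ((a + da)%R, (b + db)%R, Ordinal (ltn_pmod k' (isT : (0 < 144)%N))).

Definition r0K : flagK -> flagK := applyK r0_tab.
Definition r1K : flagK -> flagK := applyK r1_tab.
Definition r2K : flagK -> flagK := applyK r2_tab.

Definition step2 (T : Type) (f g : T -> T) (x y : T) : Prop := y = f x \/ y = g x.

Definition same_orbit (T : Type) (f g : T -> T) : T -> T -> Prop :=
  clos_refl_trans T (step2 f g).

Definition same_vertexK := same_orbit r1K r2K.
Definition same_edgeK   := same_orbit r0K r2K.
Definition same_faceK   := same_orbit r0K r1K.

Definition is_autK (phi : flagK -> flagK) : Prop :=
  bijective phi /\
  forall x, phi (r0K x) = r0K (phi x) /\ phi (r1K x) = r1K (phi x) /\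
            phi (r2K x) = r2K (phi x).

Definition is_subgroup_AutK (Gamma : (flagK -> flagK) -> Prop) : Prop :=
  [/\ forall g, Gamma g -> is_autK g,
      exists e, Gamma e /\ forall x, e x = x,
      forall g h, Gamma g -> Gamma h ->
        exists k, Gamma k /\ forall x, k x = g (h x)
    & forall g, Gamma g -> exists k, Gamma k /\ forall x, k (g x) = x].

Definition acts_without_fixed_cells (Gamma : (flagK -> flagK) -> Prop) : Prop :=
  forall g, Gamma g -> (exists x, g x <> x) ->
    forall x, ~ same_vertexK x (g x) /\ ~ same_edgeK x (g x) /\
              ~ same_faceK x (g x).

Section FiniteMaps.
Variables (F : finType) (s0 s1 s2 : F -> F).

Definition orb_rel (f g : F -> F) : rel F := [rel x y | (y == f x) || (y == g x)].
Definition cell (f g : F -> F) (x : F) : {set F} := [set y | connect (orb_rel f g) x y].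

Definition vertex_of := cell s1 s2.
Definition edge_of   := cell s0 s2.
Definition face_of   := cell s0 s1.

Definition verticesX : {set {set F}} := [set vertex_of x | x : F].
Definition edgesX    : {set {set F}} := [set edge_of x | x : F].
Definition facesX    : {set {set F}} := [set face_of x | x : F].

Definition is_flag_map : Prop :=
  [/\ forall x, s0 (s0 x) = x /\ s1 (s1 x) = x /\ s2 (s2 x) = x,
      forall x, s0 x <> x /\ s1 x <> x /\ s2 x <> x,
      forall x, s0 (s2 x) = s2 (s0 x) /\ s0 (s2 x) <> x
    & forall x y, connect [rel u v | [|| v == s0 u, v == s1 u | v == s2 u]] x y].

Definition meets (A B : {set F}) : bool := A :&: B != set0.

Definition polyhedral : Prop :=
  forall A B, A \in facesX -> B \in facesX -> A != B ->
    let CV := [set V in verticesX | meets V A && meets V B] in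
    let CE := [set E in edgesX | meets E A && meets E B] in
    (CE = set0 /\ (#|CV| <= 1)%N) \/
    (exists2 E, E \in edgesX &
        CE = [set E] /\ CV = [set V in verticesX | meets V E]).

Definition orientable : Prop :=
  exists c : F -> bool, forall x,
    [/\ c (s0 x) = ~~ c x, c (s1 x) = ~~ c x & c (s2 x) = ~~ c x].

Definition on_torus : Prop :=
  orientable /\ (#|verticesX| + #|facesX| = #|edgesX|)%N.

Definition is_autX (phi : {perm F}) : bool :=
  [forall x, [&& phi (s0 x) == s0 (phi x), phi (s1 x) == s1 (phi x)
               & phi (s2 x) == s2 (phi x)]].

Definition vertex_aut_orbit (x : F) : {set F} :=
  [set y | [exists phi : {perm F}, is_autX phi && (y \in vertex_of (phi x))]].

Definition n_vertex_orbits : nat := #|[set vertex_aut_orbit x | x : F]|.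

End FiniteMaps.

Definition is_quotient_of_K (Gamma : (flagK -> flagK) -> Prop)
    (F : finType) (s0 s1 s2 : F -> F) (eta : flagK -> F) : Prop :=
  [/\ forall y, exists x, eta x = y,
      forall x, eta (r0K x) = s0 (eta x) /\ eta (r1K x) = s1 (eta x) /\
                eta (r2K x) = s2 (eta x)
    & forall x y, eta x = eta y <-> exists g, Gamma g /\ g x = y].

Definition ord144 (k : nat) : 'I_144 := Ordinal (ltn_pmod k (isT : (0 < 144)%N)).

Definition eqK (x y : flagK) : bool := (x == y :> (int * int * 'I_144)%type).

Fixpoint orbit_len (f : flagK -> flagK) (x y : flagK) (fuel : nat) : nat :=
  match fuel with
  | 0 => 0
  | n.+1 => if eqK (f y) x then 1 else (orbit_len f x (f y) n).+1
  end.

Definition face_sizeK (x : flagK) : nat :=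
  (orbit_len (fun y => r1K (r0K y)) x x 20)%N.

Definition vertex_typeK (x : flagK) : seq nat :=
  [seq face_sizeK (iter i (fun y => r2K (r1K y)) x) | i <- iota 0 4].

Definition type_ok (s : seq nat) : bool :=
  has (fun t => (s == t) || (s == rev t))
    [seq rot i [:: 3; 4; 4; 6]%N | i <- iota 0 4] ||
  has (fun t => (s == t) || (s == rev t))
    [seq rot i [:: 3; 4; 6; 4]%N | i <- iota 0 4].

Lemma K_cell_involutions :
  all (fun k : nat => let x : flagK := (0%R, 0%R, ord144 k) in
         [&& eqK (r0K (r0K x)) x, eqK (r1K (r1K x)) x, eqK (r2K (r2K x)) x,
             ~~ eqK (r0K x) x, ~~ eqK (r1K x) x, ~~ eqK (r2K x) x &
             eqK (r0K (r2K x)) (r2K (r0K x))]) (iota 0 144).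
Proof. by vm_compute. Qed.

Lemma K_vertex_types :
  all (fun k : nat => let x : flagK := (0%R, 0%R, ord144 k) in
         eqK (iter 4 (fun y => r2K (r1K y)) x) x && type_ok (vertex_typeK x))
      (iota 0 144).
Proof. by vm_compute. Qed.

(* 1. The flag graph of K is connected: a breadth-first search provides words
      from the base flag x0 to every cell flag and to the translates of x0 by
      the unit lattice vectors.  Hence an endomorphism of K is determined by
      the image of x0.
   2. Automorphisms of K preserve vertex types; those also preserving the
      parity of flag numbers (the bipartition of the flag graph) are
      translations, or one of five rotations followed by a translation.  Each
      rotation followed by a translation fixes a face of K.
   3. As X is orientable, Gamma preserves the parity of flags; as it fixes no
      face, Gamma consists of translations.  So every translation and the
      half-turn of K normalise Gamma and descend to automorphisms of X.
   4. Every vertex of K contains, after a translation and possibly the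
      half-turn, a flag at one of the 9 vertices of triangles 0, 1, 2 of the
      cell; hence X has at most 9 vertex orbits.
   The finite facts about K are checked by computation on the fundamental
   cell and transported to all of K by translation invariance. *)

From mathcomp Require Import all_boot all_order all_algebra all_fingroup.
From Stdlib Require Import Relations.
From mathcomp Require Import ring zify.
Set Implicit Arguments. Unset Strict Implicit. Unset Printing Implicit Defensive.
Import GRing.Theory Num.Theory.
Local Open Scope ring_scope.

Definition fl (k : nat) : flagK := (0, 0, ord144 k).
Definition x0 : flagK := fl 0.

Definition flag_move (i : nat) (x : flagK) : flagK :=
  match i with 0%N => r0K x | 1%N => r1K x | _ => r2K x end.

Definition walk (w : seq nat) (x : flagK) : flagK :=
  foldl (fun y i => flag_move i y) x w.

Definition tr (u : int * int) (x : flagK) : flagK :=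
  let: (a, b, k) := x in (a + u.1, b + u.2, k).

Definition commK (f : flagK -> flagK) : Prop :=
  forall i x, f (flag_move i x) = flag_move i (f x).

Lemma flag_move_min i : flag_move i =1 flag_move (minn i 2).
Proof. by case: i => [|[|[|i]]]. Qed.

Lemma autK_commK g : is_autK g -> commK g.
Proof. by case=> _ Hg [|[|i]] x /=; case: (Hg x) => [? [? ?]]. Qed.

Lemma ord144_val (k : 'I_144) : ord144 k = k.
Proof. by apply: val_inj; rewrite /= modn_small. Qed.

Lemma tr_tr u v x : tr u (tr v x) = tr (v.1 + u.1, v.2 + u.2) x.
Proof. by case: x => [[a b] k]; rewrite /= !addrA. Qed.

Lemma tr0 x : tr (0, 0) x = x.
Proof. by case: x => [[a b] k]; rewrite /= !addr0. Qed.

Lemma tr_inj u : injective (tr u).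
Proof.
move=> x y /(congr1 (tr (- u.1, - u.2))).
by rewrite !tr_tr !subrr !tr0.
Qed.

Lemma tr_num u x : (tr u x).2 = x.2.
Proof. by case: x => [[a b] k]. Qed.

Lemma flag_decomp (x : flagK) : x = tr (x.1.1, x.1.2) (fl x.2).
Proof. by case: x => [[a b] k]; rewrite /= ord144_val !add0r. Qed.

Lemma applyK_tr tab u x : applyK tab (tr u x) = tr u (applyK tab x).
Proof.
case: x => [[a b] k]; case: u => p q; rewrite /applyK /=.
by case: (nth _ tab k) => [[da db] k'] /=; rewrite !(addrAC _ p) !(addrAC _ q).
Qed.

Lemma flag_move_tr i u x : flag_move i (tr u x) = tr u (flag_move i x).
Proof. by case: i => [|[|i]]; rewrite /= /r0K /r1K /r2K applyK_tr. Qed.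

Lemma walk_tr w u x : walk w (tr u x) = tr u (walk w x).
Proof. by elim: w x => //= i w IH x; rewrite flag_move_tr IH. Qed.

Lemma walk_cat w1 w2 x : walk (w1 ++ w2) x = walk w2 (walk w1 x).
Proof. by rewrite /walk foldl_cat. Qed.

Lemma commK_tr u : commK (tr u).
Proof. by move=> i x; rewrite flag_move_tr. Qed.

Lemma commK_comp f g : commK f -> commK g -> commK (f \o g).
Proof. by move=> Hf Hg i x /=; rewrite Hg Hf. Qed.

Lemma comm_walk f w x : commK f -> f (walk w x) = walk w (f x).
Proof. by move=> Hf; elim: w x => //= i w IH x; rewrite IH Hf. Qed.

(* A translation-invariant property of moves that holds on the fundamental
   cell holds everywhere; this reduces infinite checks to finite computations. *)
Lemma moves_by_cell (P : nat -> flagK -> bool) :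
  (forall i u x, P i (tr u x) = P i x) ->
  all (fun k => all (fun i => P i (fl k)) (iota 0 3)) (iota 0 144) ->
  forall i x, (i < 3)%N -> P i x.
Proof.
move=> Ptr /allP Hcell i x Hi; rewrite (flag_decomp x) Ptr.
have := Hcell x.2; rewrite mem_iota ltn_ord => /(_ isT) /allP; apply.
by rewrite mem_iota.
Qed.

(* Breadth-first exploration of the flag graph of K from x0: a list of
   visited flags, each paired with a word leading to it from x0.  Twenty
   layers suffice for the flags needed below. *)
Definition visit (acc : seq (flagK * seq nat) * seq (flagK * seq nat))
    (p : flagK * seq nat) : seq (flagK * seq nat) * seq (flagK * seq nat) :=
  foldl (fun acc i => let q := (flag_move i p.1, rcons p.2 i) in
           if q.1 \in map fst acc.1 then acc else (q :: acc.1, q :: acc.2))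
        acc (iota 0 3).

Fixpoint explore (n : nat) (visited frontier : seq (flagK * seq nat)) :
    seq (flagK * seq nat) :=
  if n is n'.+1 then
    let: (visited', frontier') := foldl visit (visited, [::]) frontier in
    explore n' visited' frontier'
  else visited.

Definition explored : seq (flagK * seq nat) :=
  explore 20 [:: (x0, [::])] [:: (x0, [::])].

Definition word_to (y : flagK) : seq nat :=
  nth [::] (map snd explored) (index y (map fst explored)).
Arguments word_to : simpl never.

Definition unit_vectors : seq (int * int) := [:: (1, 0); (-1, 0); (0, 1); (0, -1)].

Lemma word_to_cell : all (fun k => walk (word_to (fl k)) x0 == fl k) (iota 0 144).
Proof. by vm_compute. Qed.

Lemma word_to_unit :
  all (fun u => walk (word_to (tr u x0)) x0 == tr u x0) unit_vectors.
Proof. by vm_compute. Qed.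

Definition reachable (y : flagK) : Prop := exists w, walk w x0 = y.

Lemma reachable_add u v : reachable (tr u x0) -> reachable (tr v x0) ->
  reachable (tr (u.1 + v.1, u.2 + v.2) x0).
Proof.
move=> [w1 H1] [w2 H2]; exists (w1 ++ w2).
by rewrite walk_cat H1 walk_tr H2 tr_tr (addrC v.1) (addrC v.2).
Qed.

Lemma reachable_unit u : u \in unit_vectors -> reachable (tr u x0).
Proof. by move=> Hu; exists (word_to (tr u x0)); apply/eqP/(allP word_to_unit). Qed.

Lemma int_steps (P : int -> Prop) :
  P 0 -> (forall z, P z -> P (z + 1) /\ P (z - 1)) -> forall z, P z.
Proof.
move=> P0 PS; have H (n : nat) : P n /\ P (- n%:Z).
  elim: n => [|n [IH1 IH2]]; first by rewrite oppr0.
  by rewrite -addn1 PoszD opprD; split; [exact: (PS _ IH1).1 | exact: (PS _ IH2).2].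
by case=> n; [exact: (H n).1 | rewrite NegzE; exact: (H n.+1).2].
Qed.

Lemma reachable_all x : reachable x.
Proof.
have lattice a b : reachable (tr (a, b) x0).
  have step a' b' c d : (c, d) \in unit_vectors -> reachable (tr (a', b') x0) ->
      reachable (tr (a' + c, b' + d) x0).
    by move=> Hcd Hab; exact: (reachable_add Hab (reachable_unit Hcd)).
  elim/int_steps: a.
    elim/int_steps: b => [|b Hb]; first by exists [::]; rewrite tr0.
    by move: (step 0 b 0 1 isT Hb) (step 0 b 0 (-1) isT Hb); rewrite !addr0.
  by move=> a Ha; move: (step a b 1 0 isT Ha) (step a b (-1) 0 isT Ha); rewrite !addr0.
case: (lattice x.1.1 x.1.2) => w Hw; exists (w ++ word_to (fl x.2)).
have Hk : walk (word_to (fl x.2)) x0 = fl x.2.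
  by apply/eqP/(allP word_to_cell); rewrite mem_iota ltn_ord.
by rewrite walk_cat Hw walk_tr Hk [RHS]flag_decomp /= !add0r.
Qed.

Lemma aut_unique f g : commK f -> commK g -> f x0 = g x0 -> f =1 g.
Proof.
move=> Hf Hg H0 x; case: (reachable_all x) => w <-.
by rewrite !comm_walk // H0.
Qed.

Lemma orbit_len_inj f h x y n : injective h -> (forall z, h (f z) = f (h z)) ->
  orbit_len f (h x) (h y) n = orbit_len f x y n.
Proof.
move=> h_inj hf; elim: n y => //= n IH y.
by rewrite -hf /eqK (inj_eq h_inj) IH.
Qed.

Lemma vertex_typeK_aut h x : commK h -> injective h ->
  vertex_typeK (h x) = vertex_typeK x.
Proof.
move=> hK h_inj; move: (hK 0%N) (hK 1%N) (hK 2%N) => /= h0 h1 h2.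
apply: eq_map => i.
have -> : iter i (fun y => r2K (r1K y)) (h x) = h (iter i (fun y => r2K (r1K y)) x).
  by elim: i => //= i ->; rewrite h2 h1.
by apply: orbit_len_inj => // z; rewrite h1 h0.
Qed.

Lemma flag_move_odd i x : odd (flag_move i x).2 = ~~ odd x.2.
Proof.
have cell j y : (j < 3)%N -> odd (flag_move j y).2 == ~~ odd y.2.
  apply: (moves_by_cell (P := fun j y => odd (flag_move j y).2 == ~~ odd y.2)).
    by move=> j' u z; rewrite flag_move_tr !tr_num.
  by vm_compute.
by rewrite flag_move_min; apply/eqP/cell; exact: geq_minr.
Qed.

(* Affine endomorphisms of K: an integer matrix M acting on the lattice
   coordinates, together with the image y of x0.  The flag k of the
   fundamental cell is sent to the end of the walk from y along the word
   leading from x0 to flag k. *)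
Definition matrix2 : Type := (int * int * int * int)%type.

Definition lin (M : matrix2) (u : int * int) : int * int :=
  let: (m11, m12, m21, m22) := M in
  ((m11 * u.1 : int) + m12 * u.2, (m21 * u.1 : int) + m22 * u.2).

Definition affine_aut (M : matrix2) (y : flagK) (x : flagK) : flagK :=
  let: (a, b, k) := x in tr (lin M (a, b)) (walk (word_to (fl k)) y).

Lemma lin_add M u v : lin M (u.1 + v.1, u.2 + v.2) =
  ((lin M u).1 + (lin M v).1, (lin M u).2 + (lin M v).2).
Proof.
case: M => [[[m11 m12] m21] m22]; case: u => ? ?; case: v => ? ?.
by rewrite /lin /=; congr (_, _); ring.
Qed.

Lemma affine_aut_tr M y u x :
  affine_aut M y (tr u x) = tr (lin M u) (affine_aut M y x).
Proof.
case: x => [[a b] k]; case: u => p q.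
change (tr (p, q) (a, b, k)) with ((a, b).1 + (p, q).1, (a, b).2 + (p, q).2, k).
by rewrite [RHS]tr_tr {1}/affine_aut lin_add.
Qed.

Definition affine_move_ok (M : matrix2) (y : flagK) (i : nat) (x : flagK) : bool :=
  affine_aut M y (flag_move i x) == flag_move i (affine_aut M y x).

Definition affine_ok (M : matrix2) (y : flagK) : bool :=
  all (fun k => all (fun i => affine_move_ok M y i (fl k)) (iota 0 3)) (iota 0 144).

Lemma affine_comm M y : affine_ok M y -> commK (affine_aut M y).
Proof.
move=> ok i x; have Ptr j u z : affine_move_ok M y j (tr u z) = affine_move_ok M y j z.
  rewrite /affine_move_ok flag_move_tr !affine_aut_tr flag_move_tr.
  by rewrite (inj_eq (@tr_inj (lin M u))).
have := @moves_by_cell _ Ptr ok (minn i 2) x (geq_minr i 2).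
by rewrite /affine_move_ok -!flag_move_min => /eqP.
Qed.

(* Five rotations of K, sending x0 to the cell flags 10, 16, 20, 24 and 32;
   their linear parts have orders 3, 6, 3, 6 and 2.  That these affine maps
   are automorphisms of K is checked on the fundamental cell. *)
Definition rot_matrix (m : nat) : matrix2 :=
  match m with
  | 10%N => (0, 1, -1, -1)
  | 16%N => (1, 1, -1, 0)
  | 20%N => (-1, -1, 1, 0)
  | 24%N => (0, -1, 1, 1)
  | 32%N => (-1, 0, 0, -1)
  | _ => (1, 0, 0, 1)
  end.

Definition rotation (m : nat) : flagK -> flagK := affine_aut (rot_matrix m) (fl m).

Definition rotation_indices : seq nat := [:: 10; 16; 20; 24; 32]%N.

Lemma rotations_ok :
  all (fun m => affine_ok (rot_matrix m) (fl m) && (rotation m x0 == fl m))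
      rotation_indices.
Proof. by vm_compute. Qed.

Lemma face_walk w x : all (fun i => i < 2)%N w -> same_faceK x (walk w x).
Proof.
elim: w x => [|i w IH] x /=; first by move=> _; apply: rt_refl.
case/andP=> Hi Hw; apply: rt_trans (IH _ Hw); apply: rt_step.
by case: i Hi => [|[|]] // _; [left | right].
Qed.

Lemma face_tr u x y : same_faceK x y -> same_faceK (tr u x) (tr u y).
Proof.
elim=> [x' y' [->|->]| x' | x' y' z' _ H1 _ H2].
- by apply: rt_step; left; exact: (esym (flag_move_tr 0 u x')).
- by apply: rt_step; right; exact: (esym (flag_move_tr 1 u x')).
- exact: rt_refl.
- exact: rt_trans H1 H2.
Qed.

(* The words alternating between moves i and j, of every length below 2n:
   for (i, j) = (0, 1) and n = 6 they reach every flag of a face of K,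
   for (i, j) = (1, 2) and n = 4 every flag at a vertex of K. *)
Definition alternating_words (i j n : nat) : seq (seq nat) :=
  [seq take m (flatten (nseq n [:: i; j])) | m <- iota 0 (2 * n)].

Definition face_witness (m : nat) (y : flagK) (v : int * int) : bool :=
  let z := tr v (rotation m y) in has (fun w => walk w y == z) (alternating_words 0 1 6).

(* Witnesses for the five rotations, indexed by the residues of the
   translation part modulo (I - M) Z^2 (see below). *)
Definition face_witnesses (m : nat) : seq (flagK * (int * int)) :=
  match m with
  | 10%N => [:: ((0, 0, ord144 120), (0, 0)); ((1, 0, ord144 108), (1, 0));
               ((1, -1, ord144 132), (2, 0))]
  | 16%N => [:: ((1, 0, ord144 108), (0, 0))]
  | 20%N => [:: ((0, 0, ord144 120), (0, 0)); ((0, 0, ord144 132), (1, 0));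
               ((1, 1, ord144 108), (2, 0))]
  | 24%N => [:: ((0, 1, ord144 108), (0, 0))]
  | _ => [:: ((0, 0, ord144 84), (0, 0)); ((1, 0, ord144 52), (1, 0));
             ((0, 1, ord144 76), (0, 1)); ((1, 1, ord144 108), (1, 1))]
  end.

Lemma face_witnesses_ok :
  all (fun m => all (fun p => face_witness m p.1 p.2) (face_witnesses m))
      rotation_indices.
Proof. by vm_compute. Qed.

Lemma face_witnessP m y v : m \in rotation_indices ->
  (y, v) \in face_witnesses m -> face_witness m y v.
Proof.
by move=> Hm Hyv; move/allP: face_witnesses_ok => /(_ m Hm) /allP /(_ _ Hyv).
Qed.

(* Conjugating by the translation by u moves the witness: the rotation
   followed by tr (c, d) fixes the face of tr u y when (c, d) = (I - M) u + v. *)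
Lemma fixed_face_of_witness m y v u c d : face_witness m y v ->
  (lin (rot_matrix m) u).1 + c = v.1 + u.1 ->
  (lin (rot_matrix m) u).2 + d = v.2 + u.2 ->
  exists x, same_faceK x (tr (c, d) (rotation m x)).
Proof.
move=> /hasP [w Hw /eqP Hy] E1 E2; exists (tr u y).
rewrite /rotation affine_aut_tr tr_tr /= E1 E2 -tr_tr -{}Hy.
by apply/face_tr/face_walk; move: w Hw; apply/allP.
Qed.

Lemma int_residue (z n : int) : 0 < n -> exists q r, z = q * n + r /\ 0 <= r < n.
Proof.
move=> n_gt0; exists (z %/ n)%Z, (z %% n)%Z; split; first exact: divz_eq.
by rewrite modz_ge0 ?ltz_pmod // lt0r_neq0.
Qed.

(* Each rotation of K followed by any translation maps some face to itself:
   the composite is a rotation of the plane whose centre, modulo the lattice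
   (I - M) Z^2 of index det (I - M), is the centre of a witness face. *)
Lemma rotation10_fixed_face c d : exists x, same_faceK x (tr (c, d) (rotation 10 x)).
Proof.
have W0 := @face_witnessP 10 (0, 0, ord144 120) (0, 0) isT isT.
have W1 := @face_witnessP 10 (1, 0, ord144 108) (1, 0) isT isT.
have W2 := @face_witnessP 10 (1, -1, ord144 132) (2, 0) isT isT.
case: (@int_residue (c - d) 3 isT) => q [r [E Hr]].
have : r = 0 \/ r = 1 \/ r = 2 by lia.
case=> [r0|[r1|r2]];
  [ apply: (fixed_face_of_witness (u := (d + 2 * q, - q)) W0)
  | apply: (fixed_face_of_witness (u := (d + 2 * q, - q)) W1)
  | apply: (fixed_face_of_witness (u := (d + 2 * q, - q)) W2)] => /=; lia.
Qed.

Lemma rotation20_fixed_face c d : exists x, same_faceK x (tr (c, d) (rotation 20 x)).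
Proof.
have W0 := @face_witnessP 20 (0, 0, ord144 120) (0, 0) isT isT.
have W1 := @face_witnessP 20 (0, 0, ord144 132) (1, 0) isT isT.
have W2 := @face_witnessP 20 (1, 1, ord144 108) (2, 0) isT isT.
case: (@int_residue (c - d) 3 isT) => q [r [E Hr]].
have : r = 0 \/ r = 1 \/ r = 2 by lia.
case=> [r0|[r1|r2]];
  [ apply: (fixed_face_of_witness (u := (q, q + d)) W0)
  | apply: (fixed_face_of_witness (u := (q, q + d)) W1)
  | apply: (fixed_face_of_witness (u := (q, q + d)) W2)] => /=; lia.
Qed.

Lemma rotation16_fixed_face c d : exists x, same_faceK x (tr (c, d) (rotation 16 x)).
Proof.
have W := @face_witnessP 16 (1, 0, ord144 108) (0, 0) isT isT.
by apply: (fixed_face_of_witness (u := (d + c, - c)) W) => /=; lia.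
Qed.

Lemma rotation24_fixed_face c d : exists x, same_faceK x (tr (c, d) (rotation 24 x)).
Proof.
have W := @face_witnessP 24 (0, 1, ord144 108) (0, 0) isT isT.
by apply: (fixed_face_of_witness (u := (- d, c + d)) W) => /=; lia.
Qed.

Lemma rotation32_fixed_face c d : exists x, same_faceK x (tr (c, d) (rotation 32 x)).
Proof.
have W00 := @face_witnessP 32 (0, 0, ord144 84) (0, 0) isT isT.
have W10 := @face_witnessP 32 (1, 0, ord144 52) (1, 0) isT isT.
have W01 := @face_witnessP 32 (0, 1, ord144 76) (0, 1) isT isT.
have W11 := @face_witnessP 32 (1, 1, ord144 108) (1, 1) isT isT.
case: (@int_residue c 2 isT) => q [r [E Hr]].
case: (@int_residue d 2 isT) => q' [r' [E' Hr']].
have : (r = 0 \/ r = 1) /\ (r' = 0 \/ r' = 1) by lia.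
case=> [[r0|r1] [r'0|r'1]];
  [ apply: (fixed_face_of_witness (u := (q, q')) W00)
  | apply: (fixed_face_of_witness (u := (q, q')) W01)
  | apply: (fixed_face_of_witness (u := (q, q')) W10)
  | apply: (fixed_face_of_witness (u := (q, q')) W11)] => /=; lia.
Qed.

Lemma rotation_fixed_face m c d : m \in rotation_indices ->
  exists x, same_faceK x (tr (c, d) (rotation m x)).
Proof.
rewrite !inE => /orP [/eqP-> | /orP [/eqP-> | /orP [/eqP-> | /orP [/eqP-> | /eqP->]]]].
- exact: rotation10_fixed_face.
- exact: rotation16_fixed_face.
- exact: rotation20_fixed_face.
- exact: rotation24_fixed_face.
- exact: rotation32_fixed_face.
Qed.

Lemma rotation_comm m : m \in rotation_indices -> commK (rotation m).
Proof.
by move=> Hm; apply: affine_comm; case/andP: (allP rotations_ok m Hm).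
Qed.

Lemma rotation_x0 m : m \in rotation_indices -> rotation m x0 = fl m.
Proof. by move=> Hm; apply/eqP; case/andP: (allP rotations_ok m Hm). Qed.

Lemma same_type_flags :
  [seq k <- iota 0 144 | ~~ odd k & vertex_typeK (fl k) == vertex_typeK x0] =
  0%N :: rotation_indices.
Proof. by vm_compute. Qed.

Lemma even_aut_classification g : commK g -> injective g -> ~~ odd (g x0).2 ->
  exists c d, g =1 tr (c, d) \/
              exists2 m, m \in rotation_indices & g =1 tr (c, d) \o rotation m.
Proof.
move=> gK g_inj; case Eg: (g x0) => [[c d] m] /= m_even.
have gx0 : g x0 = tr (c, d) (fl m) by rewrite Eg /tr /fl ord144_val !add0r.
exists c, d.
have : nat_of_ord m \in 0%N :: rotation_indices.
  rewrite -same_type_flags mem_filter mem_iota ltn_ord m_even /=.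
  rewrite -(vertex_typeK_aut (fl m) (commK_tr (c, d)) (@tr_inj _)).
  by rewrite -gx0 (vertex_typeK_aut _ gK g_inj).
rewrite inE => /orP [/eqP m0 | Hm]; [left | right; exists (val m) => //].
  apply: (aut_unique gK (commK_tr _)).
  by rewrite gx0 m0.
apply: (aut_unique gK (commK_comp (commK_tr _) (rotation_comm Hm))).
by rewrite gx0 /comp (rotation_x0 Hm).
Qed.

Lemma rotation_moves_x0 m : m \in rotation_indices -> (fl m).2 != x0.2.
Proof. by move: m; apply/allP. Qed.

Lemma free_even_aut_translation Gamma g : acts_without_fixed_cells Gamma ->
  Gamma g -> commK g -> injective g -> ~~ odd (g x0).2 -> exists v, g =1 tr v.
Proof.
move=> free Gg gK g_inj g_even.
case: (even_aut_classification gK g_inj g_even) => c [d [g_tr | [m Hm gE]]].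
  by exists (c, d).
case: (rotation_fixed_face c d Hm) => x fixed.
have moved : exists y, g y <> y.
  exists x0; rewrite gE /comp (rotation_x0 Hm) => /(congr1 snd).
  by rewrite tr_num; apply/eqP; exact: rotation_moves_x0.
by case: (free g Gg moved x) => _ [_]; rewrite gE.
Qed.

Section MapAutomorphisms.
Variables (F : finType) (s0 s1 s2 : F -> F).

Lemma autXP (p : {perm F}) : reflect
  (forall x, [/\ p (s0 x) = s0 (p x), p (s1 x) = s1 (p x) & p (s2 x) = s2 (p x)])
  (is_autX s0 s1 s2 p).
Proof.
apply: (iffP forallP) => H x; first by case/and3P: (H x) => /eqP -> /eqP -> /eqP ->.
by case: (H x) => -> -> ->; rewrite !eqxx.
Qed.

Lemma autX1 : is_autX s0 s1 s2 1%g.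
Proof. by apply/autXP => x; rewrite !perm1. Qed.

Lemma autXM (p q : {perm F}) :
  is_autX s0 s1 s2 p -> is_autX s0 s1 s2 q -> is_autX s0 s1 s2 (p * q)%g.
Proof.
move=> /autXP Hp /autXP Hq; apply/autXP => x; rewrite !permM.
by case: (Hp x) => -> -> ->; case: (Hq (p x)) => -> -> ->.
Qed.

Lemma autXV (p : {perm F}) : is_autX s0 s1 s2 p -> is_autX s0 s1 s2 p^-1%g.
Proof.
move=> /autXP Hp; apply/autXP => x; rewrite -{1 3 5}(permKV p x).
by case: (Hp (p^-1%g x)) => <- <- <-; rewrite !permK.
Qed.

Lemma vertex_connect_aut (p : {perm F}) a b : is_autX s0 s1 s2 p ->
  connect (orb_rel s1 s2) a b -> connect (orb_rel s1 s2) (p a) (p b).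
Proof.
move=> /autXP Hp /connectP [path Hpath ->] {b}.
elim: path a Hpath => [|c path IH] a /=; first by rewrite connect0.
case/andP=> Hac Hpath; apply: connect_trans (IH c Hpath); apply: connect1.
case: (Hp a) => _ E1 E2; rewrite /orb_rel /= -E1 -E2.
by case/orP: Hac => /eqP ->; rewrite eqxx ?orbT.
Qed.

Hypothesis s12_invol : forall x, s1 (s1 x) = x /\ s2 (s2 x) = x.

Lemma vertex_connect_sym : connect_sym (orb_rel s1 s2).
Proof.
apply: sym_connect_sym => x y; rewrite /orb_rel /=.
case: (s12_invol x) => h1 h2; case: (s12_invol y) => h1' h2'.
by congr orb; apply/eqP/eqP => ->.
Qed.

Lemma vertex_aut_orbit_sub (p : {perm F}) y y' : is_autX s0 s1 s2 p ->
  y' \in vertex_of s1 s2 (p y) ->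
  vertex_aut_orbit s0 s1 s2 y' \subset vertex_aut_orbit s0 s1 s2 y.
Proof.
move=> Hp; rewrite inE => Hy; apply/subsetP => z.
rewrite !inE => /existsP [q /andP [Hq Hz]]; apply/existsP; exists (p * q)%g.
rewrite autXM //= permM inE; rewrite inE in Hz.
exact: (connect_trans (vertex_connect_aut Hq Hy) Hz).
Qed.

Lemma vertex_aut_orbit_eq (p : {perm F}) y y' : is_autX s0 s1 s2 p ->
  y' \in vertex_of s1 s2 (p y) ->
  vertex_aut_orbit s0 s1 s2 y' = vertex_aut_orbit s0 s1 s2 y.
Proof.
move=> Hp Hy; apply/eqP; rewrite eqEsubset (vertex_aut_orbit_sub Hp Hy) /=.
apply: (vertex_aut_orbit_sub (autXV Hp)); move: Hy; rewrite !inE => Hy.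
by rewrite vertex_connect_sym -{1}(permK p y) (vertex_connect_aut (autXV Hp) Hy).
Qed.

End MapAutomorphisms.

Lemma n_vertex_orbits_le (F : finType) (s0 s1 s2 : F -> F) n (rep : 'I_n -> F) :
  (forall x, exists i, vertex_aut_orbit s0 s1 s2 x = vertex_aut_orbit s0 s1 s2 (rep i)) ->
  (n_vertex_orbits s0 s1 s2 <= n)%N.
Proof.
move=> Hrep; rewrite /n_vertex_orbits -[n]card_ord.
apply: leq_trans (leq_imset_card (fun i => vertex_aut_orbit s0 s1 s2 (rep i)) _).
apply/subset_leq_card/subsetP => O /imsetP [x _ ->].
by case: (Hrep x) => i ->; apply/imsetP; exists i.
Qed.

(* The half-turn of K (linear part -I): it exchanges the triangles f and
   5 - f of the fundamental cell and conjugates every translation to its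
   inverse. *)
Definition half_turn : flagK -> flagK := rotation 32.

Lemma half_turn_comm : commK half_turn.
Proof. exact: rotation_comm. Qed.

Lemma half_turn_tr u x : half_turn (tr u x) = tr (- u.1, - u.2) (half_turn x).
Proof.
rewrite /half_turn /rotation affine_aut_tr; congr tr.
by case: u => a b; rewrite /lin /=; congr (_, _); ring.
Qed.

Lemma half_turnK : involutive half_turn.
Proof.
apply: (aut_unique (commK_comp half_turn_comm half_turn_comm) (g := id)).
  by [].
by vm_compute.
Qed.

Lemma tr_comm u v x : tr u (tr v x) = tr v (tr u x).
Proof. by rewrite !tr_tr (addrC u.1) (addrC u.2). Qed.

(* A flag of one of the three triangles 0, 1, 2 of the fundamental cell
   (triangle f has flags 6f, ..., 6f + 5), taken with even flag number. *)
Definition representative (z : flagK) : bool := (z.2 < 18)%N && ~~ odd z.2.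

(* Every vertex of K contains a flag which is a translate of a representative,
   or whose image under the half-turn is: each vertex lies on exactly one
   triangle, and the half-turn exchanges triangles 0, 1, 2 with 5, 4, 3. *)
Lemma vertex_representatives :
  all (fun k => has (fun w => representative (walk w (fl k)) ||
                              representative (half_turn (walk w (fl k))))
                    (alternating_words 1 2 4)) (iota 0 144).
Proof. by vm_compute. Qed.

Lemma representativeP z : representative z ->
  exists i : 'I_9, z = tr (z.1.1, z.1.2) (fl (2 * i)).
Proof.
case/andP=> z18 z_even; have i9 : (z.2./2 < 9)%N by rewrite ltn_half_double.
exists (Ordinal i9); rewrite [LHS]flag_decomp /=.
by rewrite -[in LHS](odd_double_half z.2) (negbTE z_even) add0n -muln2 mulnC.
Qed.

Section Quotient.
Variables (Gamma : (flagK -> flagK) -> Prop) (F : finType) (s0 s1 s2 : F -> F)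
  (eta : flagK -> F).
Hypothesis eta_onto : forall y, exists x, eta x = y.
Hypothesis eta_moves : forall x, eta (r0K x) = s0 (eta x) /\
  eta (r1K x) = s1 (eta x) /\ eta (r2K x) = s2 (eta x).
Hypothesis eta_fibres : forall x y, eta x = eta y <-> exists g, Gamma g /\ g x = y.

Lemma eta_vertex w z : all (fun j => (j == 1) || (j == 2))%N w ->
  eta (walk w z) \in vertex_of s1 s2 (eta z).
Proof.
elim: w z => [|i w IH] z /=; first by rewrite inE connect0.
case/andP=> Hi Hw; move: (IH (flag_move i z) Hw); rewrite !inE.
apply: connect_trans; apply: connect1; rewrite /orb_rel /=.
case: (eta_moves z) => _ [E1 E2].
by case/orP: Hi => /eqP -> /=; rewrite ?E1 ?E2 eqxx ?orbT.
Qed.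

(* If X is orientable, Gamma preserves the parity of the flags of K: the
   orientation of X pulled back to K differs from the parity by a constant. *)
Lemma gamma_even (c : F -> bool) :
  (forall y, [/\ c (s0 y) = ~~ c y, c (s1 y) = ~~ c y & c (s2 y) = ~~ c y]) ->
  forall g, Gamma g -> ~~ odd (g x0).2.
Proof.
move=> orient g Gg.
have invariant w z : c (eta (walk w z)) (+) odd (walk w z).2 = c (eta z) (+) odd z.2.
  elim: w z => //= i w IH z; rewrite IH flag_move_odd.
  have -> : c (eta (flag_move i z)) = ~~ c (eta z).
    case: (eta_moves z) (orient (eta z)) => E0 [E1 E2] [C0 C1 C2].
    by case: i => [|[|i]] /=; rewrite ?E0 ?E1 ?E2.
  by case: (c (eta z)); case: (odd z.2).
have fixed : eta (g x0) = eta x0 by symmetry; apply/eta_fibres; exists g.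
case: (reachable_all (g x0)) => w Hw.
by have := invariant w x0; rewrite Hw fixed => /addbI ->.
Qed.

Definition respects_fibres (phi : flagK -> flagK) : Prop :=
  forall x y, eta x = eta y -> eta (phi x) = eta (phi y).

Lemma normalizer_respects phi :
  (forall g, Gamma g -> exists2 g', Gamma g' & forall x, phi (g x) = g' (phi x)) ->
  respects_fibres phi.
Proof.
move=> norm x y /eta_fibres [g [Gg <-]]; case: (norm g Gg) => g' Gg' E.
by apply/eta_fibres; exists g'; rewrite E.
Qed.

Lemma descend phi psi : commK phi -> respects_fibres phi ->
  respects_fibres psi -> cancel phi psi ->
  exists p : {perm F}, is_autX s0 s1 s2 p /\ forall x, p (eta x) = eta (phi x).
Proof.
move=> phiK phi_resp psi_resp phiK'.
have ex y : exists x, eta x == y by case: (eta_onto y) => x <-; exists x.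
pose f y := eta (phi (xchoose (ex y))).
have fE x : f (eta x) = eta (phi x) by apply/phi_resp/eqP/(xchooseP (ex (eta x))).
have f_inj : injective f.
  move=> y1 y2; case: (eta_onto y1) => x1 <-; case: (eta_onto y2) => x2 <-.
  by rewrite !fE => /psi_resp; rewrite !phiK'.
exists (perm f_inj); split; last by move=> x; rewrite permE fE.
apply/autXP => y; case: (eta_onto y) => x <-; rewrite !permE.
case: (eta_moves x) => <- [<- <-]; rewrite !fE.
by move: (phiK 0%N x) (phiK 1%N x) (phiK 2%N x) => /= -> -> ->;
  case: (eta_moves (phi x)) => -> [-> ->].
Qed.

Hypothesis gamma_translations : forall g, Gamma g -> exists v, g =1 tr v.
Hypothesis gamma_inverse :
  forall g, Gamma g -> exists k, Gamma k /\ forall x, k (g x) = x.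

(* Translations commute with Gamma, the half-turn conjugates it to itself;
   both therefore induce automorphisms of X. *)
Lemma translation_descends u :
  exists p : {perm F}, is_autX s0 s1 s2 p /\ forall x, p (eta x) = eta (tr u x).
Proof.
have resp v : respects_fibres (tr v).
  apply: normalizer_respects => g Gg; exists g => // x.
  by case: (gamma_translations Gg) => w gw; rewrite !gw tr_comm.
apply: (descend (commK_tr u) (resp u) (resp (- u.1, - u.2))) => x.
by rewrite tr_tr !addrN tr0.
Qed.

Lemma half_turn_descends :
  exists p : {perm F}, is_autX s0 s1 s2 p /\ forall x, p (eta x) = eta (half_turn x).
Proof.
have resp : respects_fibres half_turn.
  apply: normalizer_respects => g Gg.
  case: (gamma_translations Gg) (gamma_inverse Gg) => v gv [k [Gk kg]].
  have k_tr y : k y = tr (- v.1, - v.2) y.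
    transitivity (k (g (tr (- v.1, - v.2) y))); last exact: kg.
    by rewrite gv tr_tr !addNr tr0.
  by exists k => // x; rewrite gv half_turn_tr k_tr.
exact: (descend half_turn_comm resp resp half_turnK).
Qed.

Hypothesis s12_invol : forall y, s1 (s1 y) = y /\ s2 (s2 y) = y.

Notation orbit := (vertex_aut_orbit s0 s1 s2).

Lemma descended_orbit phi (p : {perm F}) : is_autX s0 s1 s2 p ->
  (forall x, p (eta x) = eta (phi x)) -> forall x, orbit (eta (phi x)) = orbit (eta x).
Proof.
move=> Hp pE x; apply: (vertex_aut_orbit_eq s12_invol Hp).
by rewrite pE inE connect0.
Qed.

Lemma translate_orbit u x : orbit (eta (tr u x)) = orbit (eta x).
Proof. by case: (translation_descends u) => p [Hp pE]; exact: (descended_orbit Hp pE x). Qed.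

Lemma half_turn_orbit x : orbit (eta (half_turn x)) = orbit (eta x).
Proof. by case: half_turn_descends => p [Hp pE]; exact: (descended_orbit Hp pE x). Qed.

Lemma walk_orbit w x : w \in alternating_words 1 2 4 -> orbit (eta (walk w x)) = orbit (eta x).
Proof.
move=> Hw; apply: (vertex_aut_orbit_eq s12_invol (autX1 s0 s1 s2)); rewrite perm1.
by apply: eta_vertex; move: w Hw; apply/allP.
Qed.

Lemma vertex_orbit_representative y :
  exists i : 'I_9, orbit y = orbit (eta (fl (2 * i))).
Proof.
case: (eta_onto y) => x <-.
have /hasP [w Hw rep] : has (fun w => representative (walk w (fl x.2)) ||
    representative (half_turn (walk w (fl x.2)))) (alternating_words 1 2 4).
  by apply: (allP vertex_representatives); rewrite mem_iota ltn_ord.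
rewrite -(walk_orbit x Hw) [x in walk w x]flag_decomp walk_tr translate_orbit.
case/orP: rep => [|/representativeP [i Ei]]; last first.
  by exists i; rewrite -half_turn_orbit Ei translate_orbit.
by case/representativeP => i ->; exists i; rewrite translate_orbit.
Qed.

End Quotient.

Theorem theorem1 (Gamma : (flagK -> flagK) -> Prop)
    (F : finType) (s0 s1 s2 : F -> F) (eta : flagK -> F) :
  is_subgroup_AutK Gamma ->
  acts_without_fixed_cells Gamma ->
  is_quotient_of_K Gamma s0 s1 s2 eta ->
  is_flag_map s0 s1 s2 ->
  polyhedral s0 s1 s2 ->
  on_torus s0 s1 s2 ->
  (n_vertex_orbits s0 s1 s2 <= 9)%N.
Proof.
case=> autK _ _ inverse free [onto moves fibres] [invol _ _ _] _ [[c orient] _].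
have s12_invol y : s1 (s1 y) = y /\ s2 (s2 y) = y by case: (invol y) => _.
have translations g : Gamma g -> exists v, g =1 tr v.
  move=> Gg; case: (autK g Gg) => -[g' gK _] _.
  apply: (free_even_aut_translation free Gg (autK_commK (autK g Gg))).
    exact: (can_inj gK).
  exact: (gamma_even moves fibres orient Gg).
apply: (n_vertex_orbits_le (rep := fun i : 'I_9 => eta (fl (2 * i)))).
exact: (vertex_orbit_representative onto moves fibres translations inverse s12_invol).
Qed.
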